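(* Let $Q$ be a rational function with distinct poles $z_1,\dotsc,z_d$ ($d\ge1$) of orders $r_1,\dotsc,r_d$. Put $P=\prod_{i=1}^d(z-z_i)^{r_i}$ and $P_0=\prod_{i=1}^d(z-z_i)$, and for each $n\ge1$ write $Q^{(n)}=\frac{\alpha_nR_n}{PP_0^n}$ with $\alpha_n\in\mathbb{C}$ and $R_n\in\mathbb{C}[z]$ monic. Then $\frac{\log|n!/\alpha_n|}{n}\to0$ as $n\to\infty$. *)

From HB Require Import structures.
From mathcomp Require Import all_boot all_order all_algebra.
From mathcomp Require Import complex.
From mathcomp Require Import all_classical all_reals all_analysis.
Set Implicit Arguments. Unset Strict Implicit. Unset Printing Implicit Defensive.
Import Order.TTheory GRing.Theory Num.Theory.
Local Open Scope ring_scope.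

(* Rational functions over C = R[i] are represented by pairs (numerator, denominator)
   of polynomials; a pair (a, b) with b != 0 stands for a / b. *)

Definition ratderiv (C : comNzRingType) (q : {poly C} * {poly C}) : {poly C} * {poly C} :=
  (q.1^`() * q.2 - q.1 * q.2^`(), q.2 ^+ 2).

Definition ratderivn (C : comNzRingType) (n : nat) (q : {poly C} * {poly C}) :=
  iter n (@ratderiv C) q.

Definition ratfun_eq (C : comNzRingType) (q1 q2 : {poly C} * {poly C}) : Prop :=
  q1.1 * q2.2 = q2.1 * q1.2.

From HB Require Import structures.
From mathcomp Require Import all_boot all_order all_algebra.
From mathcomp Require Import complex.
From mathcomp Require Import all_classical all_reals all_analysis.
From mathcomp Require Import zify ring lra.
Set Implicit Arguments. Unset Strict Implicit. Unset Printing Implicit Defensive.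
Import Order.TTheory GRing.Theory Num.Theory numFieldNormedType.Exports.
Import ComplexField.Normc.
Local Open Scope classical_set_scope.
Local Open Scope ring_scope.

(* Write A = q P + A0 with size A0 < size P; A0 != 0 because A and P are coprime.
   For n >= size q the n-th derivative of A/P is that of A0/P.  Differentiating
   a fraction a/b whose degree gap deg b - deg a is v >= 1 yields a fraction with
   gap v + 1 and multiplies the ratio of leading coefficients by -v.  So after n
   steps this ratio is c (-1)^n (m+n)!/m!, where c = lead A0 / lead P and m + 1
   is the initial gap.  As R_n, P and P0 are monic, alpha_n is exactly this
   ratio, whence |n!/alpha_n| = 1 / (|c| C(m+n, n)) and
   0 <= log C(m+n, n) <= m log (n+1) = o(n). *)

Lemma coefM_size_le (C : nzSemiRingType) (p q : {poly C}) i j :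
  (size p <= i.+1)%N -> (size q <= j.+1)%N -> (p * q)`_(i + j) = p`_i * q`_j.
Proof.
move=> /leq_sizeP sp /leq_sizeP sq.
have i_lt : (i < (i + j).+1)%N by rewrite ltnS leq_addr.
rewrite coefM (bigD1 (Ordinal i_lt)) //= addKn big1 ?addr0 // => k /eqP ne_ki.
have [k_lt|k_gt|eq_ki] := ltngtP k i; last by case: ne_ki; apply: val_inj.
  by rewrite sq ?mulr0 //; lia.
by rewrite sp ?mul0r.
Qed.

Lemma size_deriv_leq (C : nzRingType) (p : {poly C}) n :
  (size p <= n.+1)%N -> (size p^`() <= n)%N.
Proof.
by move=> /leq_sizeP sp; apply/leq_sizeP => k k_ge; rewrite coef_deriv sp ?mul0rn.
Qed.

Lemma coef_ratderiv_num (C : comNzRingType) (a b : {poly C}) i j :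
  (size a <= i.+1)%N -> (size b <= j.+1)%N -> (0 < j)%N ->
  (ratderiv (a, b)).1`_(i + j).-1 = (i%:R - j%:R) * a`_i * b`_j.
Proof.
move=> sa sb j_gt0; rewrite coefB -(prednK j_gt0) addnS /=.
have sb' : (size b^`() <= j.-1.+1)%N by rewrite prednK // size_deriv_leq.
rewrite (coefM_size_le sa sb') coef_deriv prednK //.
case: i sa => [|i] sa.
  by move/size_deriv_leq/size_poly_leq0P: sa => ->; rewrite mul0r coef0 mulrnAr; ring.
rewrite addSn -addnS prednK // (coefM_size_le (size_deriv_leq sa) sb) coef_deriv.
by rewrite mulrnAr -mulrnAl; ring.
Qed.

Lemma ratderivn_add_poly (C : comNzRingType) (p a b : {poly C}) n :
  let q := ratderivn n (a, b) in
  ratderivn n (p * b + a, b) = (p^`(n) * q.2 + q.1, q.2).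
Proof.
elim: n => [|n IH]; first by rewrite derivn0.
rewrite /ratderivn !iterS -!/(ratderivn n _) IH derivnS.
case: (ratderivn n (a, b)) => a' b' /=.
by rewrite /ratderiv /= derivD derivM; congr (_, _); ring.
Qed.

Lemma ratfun_eq_lead_coef (F : fieldType) (q : {poly F} * {poly F}) c p s :
  ratfun_eq q (c *: p, s) -> p \is monic -> s \is monic -> q.2 != 0 ->
  c = lead_coef q.1 / lead_coef q.2.
Proof.
move=> /(congr1 lead_coef) eq_q p_monic s_monic q2_neq0.
move: eq_q; rewrite !lead_coefM lead_coefZ (monicP p_monic) (monicP s_monic) !mulr1 => ->.
by rewrite mulfK ?lead_coef_eq0.
Qed.

Lemma coprimep_modp_neq0 (F : fieldType) (a p : {poly F}) :
  coprimep a p -> (1 < size p)%N -> a %% p != 0.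
Proof.
move=> cop_ap; apply: contraTneq => modp0; rewrite -leqNgt.
by move: cop_ap; rewrite -coprimep_modl modp0 coprime0p => /eqp_size ->; rewrite size_poly1.
Qed.

Lemma size_prod_XsubC_exp_gt1 (C : idomainType) (I : finType) (z : I -> C) r i0 :
  (0 < r i0)%N -> (1 < size (\prod_i ('X - (z i)%:P) ^+ r i)%R)%N.
Proof.
move=> r_gt0; apply: (@root_size_gt1 _ (z i0)).
  by apply/monic_neq0/monic_prod => i _; apply/monic_exp/monicXsubC.
rewrite /root horner_prod (bigD1 i0) //= horner_exp hornerXsubC subrr.
by rewrite expr0n gtn_eqF ?mul0r.
Qed.

Section ProperFractions.

Variable F : fieldType.
Hypothesis F_char0 : [pchar F] =i pred0.

Lemma ratderiv_num_size_lead (a b : {poly F}) i j :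
  size a = i.+1 -> size b = j.+1 -> (i < j)%N ->
  size (ratderiv (a, b)).1 = (i + j)%N /\
  lead_coef (ratderiv (a, b)).1 = (i%:R - j%:R) * lead_coef a * lead_coef b.
Proof.
move=> sa sb lt_ij; set N := (ratderiv _).1.
have j_gt0 : (0 < j)%N by apply: leq_ltn_trans lt_ij.
have topN : N`_(i + j).-1 = (i%:R - j%:R) * lead_coef a * lead_coef b.
  by rewrite coef_ratderiv_num ?sa ?sb // !lead_coefE sa sb.
have topN_neq0 : N`_(i + j).-1 != 0.
  have a_neq0 : a != 0 by rewrite -size_poly_eq0 sa.
  have b_neq0 : b != 0 by rewrite -size_poly_eq0 sb.
  rewrite topN mulf_neq0 ?mulf_neq0 ?lead_coef_eq0 //.
  rewrite -opprB -(natrB _ (ltnW lt_ij)) oppr_eq0 ((pcharf0P F).1 F_char0).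
  by rewrite subn_eq0 -ltnNge.
have size_le : (size N <= i + j)%N.
  apply: leq_trans (size_polyD _ _) _; rewrite size_polyN geq_max.
  apply/andP; split; apply: leq_trans (size_polyMleq _ _) _.
    by rewrite sb addnS leq_add2r size_deriv_leq ?sa.
  by rewrite sa addSn leq_add2l size_deriv_leq ?sb.
have size_N : size N = (i + j)%N.
  apply/anti_leq; rewrite size_le /=; apply: contraNT topN_neq0; rewrite -ltnNge => lt_N.
  by rewrite nth_default // -ltnS prednK ?addn_gt0 ?j_gt0 ?orbT.
by rewrite /lead_coef size_N topN.
Qed.

Lemma ratderiv_proper (a b : {poly F}) v :
  a != 0 -> b != 0 -> (0 < v)%N -> (size a + v)%N = size b ->
  let q := ratderiv (a, b) in
  [/\ q.1 != 0, (size q.1 + v.+1)%N = size q.2 &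
      lead_coef q.1 / lead_coef q.2 = - v%:R * (lead_coef a / lead_coef b)].
Proof.
move=> a_neq0 b_neq0 v_gt0 sab q.
have sa : size a = (size a).-1.+1 by rewrite prednK // size_poly_gt0.
have sb : size b = ((size a).-1 + v).+1 by rewrite -sab {1}sa.
have lt_gap : ((size a).-1 < (size a).-1 + v)%N by rewrite -{1}[_.-1]addn0 ltn_add2l.
have [sN lN] := ratderiv_num_size_lead sa sb lt_gap.
have sb2 : size q.2 = (((size a).-1 + v).*2).+1.
  by rewrite -[size _]prednK ?size_poly_gt0 ?expf_neq0 // size_exp sb muln2.
split.
- by rewrite -size_poly_eq0 sN -lt0n; lia.
- by rewrite sN sb2 -addnn; lia.
rewrite lN lead_coef_exp natrD; field.
by rewrite lead_coef_eq0.
Qed.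

Lemma ratderivn_proper (a b : {poly F}) m :
  a != 0 -> b != 0 -> (size a + m.+1)%N = size b -> forall n,
  let q := ratderivn n (a, b) in
  [/\ q.1 != 0, q.2 != 0, (size q.1 + (m + n).+1)%N = size q.2 &
      lead_coef q.1 / lead_coef q.2 =
        lead_coef a / lead_coef b * (-1) ^+ n * ((m + n) ^_ n)%:R].
Proof.
move=> a_neq0 b_neq0 sab; elim=> [|n]; first by rewrite /= addn0 ffactn0 expr0 !mulr1.
rewrite /ratderivn iterS -/(ratderivn n _).
case: (ratderivn n (a, b)) => a' b' /= [a'_neq0 b'_neq0 sab' lab'].
have [a''_neq0 sab'' ->] := ratderiv_proper a'_neq0 b'_neq0 (ltn0Sn _) sab'.
split=> //; first by rewrite expf_neq0.
  by move: sab''; rewrite !addnS.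
by rewrite lab' addnS ffactSS natrM exprS; ring.
Qed.

Lemma ratderivn_lead_coef (A P : {poly F}) m n :
  P != 0 -> A %% P != 0 -> (size (A %% P)%R + m.+1)%N = size P -> (size (A %/ P)%R <= n)%N ->
  let q := ratderivn n (A, P) in
  q.2 != 0 /\ lead_coef q.1 / lead_coef q.2 =
              lead_coef (A %% P) / lead_coef P * (-1) ^+ n * ((m + n) ^_ n)%:R.
Proof.
move=> P_neq0 A0_neq0 sA0 n_ge.
rewrite [X in ratderivn n (X, P)](divp_eq A P) ratderivn_add_poly derivn_poly0 //.
rewrite mul0r add0r -surjective_pairing.
by have [_ ? _ ?] := ratderivn_proper A0_neq0 P_neq0 sA0 n; split.
Qed.

End ProperFractions.

Lemma bin_leq_expS (m n : nat) : ('C(m + n, n) <= n.+1 ^ m)%N.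
Proof.
rewrite -bin_sub ?leq_addl // addnK.
elim: m => [|m IH]; first by rewrite bin0.
have := mul_bin_diag (m.+1 + n) m; rewrite addSn /= => eq_bin.
rewrite expnS -(leq_pmul2l (ltn0Sn m)) -eq_bin; nia.
Qed.

Section LogGrowth.

Variable R : realType.

Lemma ln_natS_div_cvg0 : (ln (n.+1%:R : R) / n%:R) @[n --> \oo] --> 0.
Proof.
have bound_cvg0 : (4 * Num.sqrt (harmonic n) : R) @[n --> \oo] --> 0.
  rewrite -[0](mulr0 4) -sqrtr0; apply: cvgMl_tmp.
  by apply: (cvg_comp _ _ cvg_harmonic); apply: sqrt_continuous.
apply: (@squeeze_cvgr _ _ _ _ (fun=> 0) _ _ _ _ (cvg_cst _) bound_cvg0).
near=> n; have n_gt0 : (0 < n)%N by near: n; exists 1%N.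
have x_ge1 : 1 <= (n%:R : R) by rewrite ler1n.
set s := Num.sqrt (n.+1%:R : R).
have s_gt0 : 0 < s by rewrite sqrtr_gt0 ltr0n.
have ss : s * s = n%:R + 1 by rewrite -expr2 sqr_sqrtr ?ler0n // -natr1.
(* ln (n+1) = 2 ln s < 2 s with s = sqrt (n+1), and 2 s / n <= 4 / s. *)
have lnE : ln (n.+1%:R : R) = ln s *+ 2 by rewrite -lnXn // sqr_sqrtr ?ler0n.
have ln_lt := ln_sublinear s_gt0.
rewrite /harmonic /= sqrtrV ?ler0n // -/s lnE divr_ge0 ?mulrn_wge0 ?ln_ge0 ?ler0n //=.
  by rewrite ler_pdivrMr ?(lt_le_trans ltr01) // mulrAC ler_pdivlMr // mulr2n; nra.
nra.
Unshelve. all: by end_near.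
Qed.

Lemma ln_bin_div_cvg0 (m : nat) :
  (ln ('C(m + n, n)%:R : R) / n%:R) @[n --> \oo] --> 0.
Proof.
have bound_cvg0 : (m%:R * (ln (n.+1%:R : R) / n%:R)) @[n --> \oo] --> 0.
  by rewrite -(mulr0 m%:R); apply: cvgMl_tmp; apply: ln_natS_div_cvg0.
apply: (@squeeze_cvgr _ _ _ _ (fun=> 0) _ _ _ _ (cvg_cst _) bound_cvg0).
apply: nearW => n.
have C_ge1 : 1 <= ('C(m + n, n)%:R : R) by rewrite ler1n bin_gt0 leq_addl.
rewrite divr_ge0 ?ln_ge0 //= mulrA ler_wpM2r ?invr_ge0 // mulr_natl -lnXn ?ltr0n //.
rewrite ler_ln ?posrE ?exprn_gt0 ?ltr0n ?bin_gt0 ?leq_addl //.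
by rewrite -natrX ler_nat bin_leq_expS.
Qed.

Lemma ln_div_bin_cvg0 (k : R) (m : nat) : 0 < k ->
  (ln (k / 'C(m + n, n)%:R) / n%:R) @[n --> \oo] --> 0.
Proof.
move=> k_gt0.
have inv_cvg0 : (n%:R^-1 : R) @[n --> \oo] --> 0.
  apply/gtr0_cvgV0; last exact: cvgr_idn.
  by near=> n; rewrite ltr0n; near: n; exists 1%N.
suff -> : (fun n => ln (k / 'C(m + n, n)%:R) / n%:R) =
          (fun n => ln k * n%:R^-1 - ln ('C(m + n, n)%:R : R) / n%:R).
  rewrite -[0](subr0 0) -{1}(mulr0 (ln k)).
  by apply: cvgB; [apply: cvgMl_tmp | apply: ln_bin_div_cvg0].
apply/funext => n.
by rewrite ln_div ?posrE ?ltr0n ?bin_gt0 ?leq_addl // mulrBl.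
Unshelve. all: by end_near.
Qed.

End LogGrowth.

Section ComplexNorm.

Variable R : rcfType.

Lemma normc_gt0 (x : R[i]) : x != 0 -> 0 < normc x.
Proof.
move=> x_neq0; rewrite lt_neqAle eq_sym; apply/andP; split.
  by apply: contra x_neq0 => /eqP/eq0_normc ->.
by case: x {x_neq0} => a b; apply: sqrtr_ge0.
Qed.

Lemma normc_sign (n : nat) : normc ((-1) ^+ n : R[i]) = 1.
Proof. by rewrite -signr_odd; case: odd; rewrite ?expr1 ?normcN normc1. Qed.

Lemma normc_nat (n : nat) : normc (n%:R : R[i]) = n%:R.
Proof. by rewrite normcMn normc1. Qed.

Lemma normc_fact_div_ffact (c : R[i]) (m n : nat) :
  normc (n`!%:R / (c * (-1) ^+ n * ((m + n) ^_ n)%:R)) =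
  (normc c)^-1 / 'C(m + n, n)%:R.
Proof.
have fact_neq0 : (n`!%:R : R) != 0 by rewrite pnatr_eq0 -lt0n fact_gt0.
rewrite -bin_ffact natrM !normcM normcV !normcM normc_sign !normc_nat mulr1.
by rewrite !invfM mulrCA [n`!%:R * _]mulrCA divff ?mulr1.
Qed.

End ComplexNorm.

Theorem lemma4p3 (R : realType) (d : nat) (z : 'I_d -> R[i]) (r : 'I_d -> nat)
  (A : {poly R[i]}) (alpha : nat -> R[i]) (Rn : nat -> {poly R[i]}) :
  (0 < d)%N ->
  injective z ->
  (forall i, 0 < r i)%N ->
  let P := \prod_(i < d) ('X - (z i)%:P) ^+ r i in
  let P0 := \prod_(i < d) ('X - (z i)%:P) in
  coprimep A P ->
  (forall n, (1 <= n)%N ->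
     Rn n \is monic /\
     ratfun_eq (ratderivn n (A, P)) (alpha n *: Rn n, P * P0 ^+ n)) ->
  (ln (ComplexField.Normc.normc (n`!%:R / alpha n)) / n%:R : R) @[n --> \oo] --> 0.
Proof.
move=> d_gt0 _ r_gt0 P P0 cop_AP derivE.
have P_monic : P \is monic by apply: monic_prod => i _; apply/monic_exp/monicXsubC.
have P_neq0 := monic_neq0 P_monic.
have P_gt1 : (1 < size P)%N := size_prod_XsubC_exp_gt1 z (r_gt0 (Ordinal d_gt0)).
set A0 := A %% P; have A0_neq0 : A0 != 0 := coprimep_modp_neq0 cop_AP P_gt1.
have [m sA0] : exists m, (size A0 + m.+1)%N = size P.
  have lt_A0P : (size A0 < size P)%N by rewrite ltn_modp.
  by exists (size P - size A0).-1; lia.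
set c := lead_coef A0 / lead_coef P.
have normcV_gt0 : 0 < (normc c)^-1.
  by rewrite invr_gt0 normc_gt0 // /c mulf_neq0 ?invr_eq0 ?lead_coef_eq0.
have alphaE n : (0 < n)%N -> (size (A %/ P)%R <= n)%N ->
    alpha n = c * (-1) ^+ n * ((m + n) ^_ n)%:R.
  move=> n_gt0 n_ge; have [Rn_monic eq_n] := derivE n n_gt0.
  have [q2_neq0 <-] := ratderivn_lead_coef (@pchar_num _) P_neq0 A0_neq0 sA0 n_ge.
  apply: ratfun_eq_lead_coef eq_n Rn_monic _ q2_neq0.
  by rewrite monicMl // monic_exp // monic_prod_XsubC.
apply: (cvg_trans _ (ln_div_bin_cvg0 m normcV_gt0)).
apply: near_eq_cvg; near=> n; rewrite alphaE ?normc_fact_div_ffact //.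
  by near: n; exists 1%N.
by near: n; exists (size (A %/ P)%R).
Unshelve. all: by end_near.
Qed.
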